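(* Let $I\subseteq\mathbb{R}$ be an interval and $\mathscr{M}$ a mean on $I$. Then $\mathscr{M}$ is of type $\mathcal{T}_1^+$ if and only if $\mathscr{M}$ is a quasi-arithmetic mean on $I$, i.e. there is a continuous strictly monotone $f\colon I\to\mathbb{R}$ with $\mathscr{M}(x_1,\dots,x_n)=f^{-1}\big(\frac{f(x_1)+\cdots+f(x_n)}{n}\big)$ for all $n\in\mathbb{N}$ and $x_1,\dots,x_n\in I$.
   Context: A mean on an interval $I$ is a function $\mathscr{M}\colon\bigcup_{n=1}^\infty I^n\to I$ with $\min(a)\le\mathscr{M}(a)\le\max(a)$ for every $a$. For a commutative semigroup $(Y,+)$ and $F\colon I\to Y$, let $\omega F(I):=\bigcup_{n=1}^\infty\{F(x_1)+\cdots+F(x_n): x_i\in I\}$, and for $G\colon\omega F(I)\to I$ define $\mathscr{L}_{F,G}(a_1,\dots,a_n):=G(F(a_1)+\cdots+F(a_n))$. A mean $\mathscr{M}$ on $I$ is of type $\mathcal{T}_k^+$ ($k\in\mathbb{N}$) if $\mathscr{M}=\mathscr{L}_{F,G}$ for some continuous $F\colon I\to(\mathbb{R}^k\times\mathbb{Z},+)$ and some continuous $G\colon\omega F(I)\to I$ (with $\mathbb{Z}$ discrete, product topology on $\mathbb{R}^k\times\mathbb{Z}$, subspace topology on $\omega F(I)$). *)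

From Stdlib Require Import Reals List ZArith.
Open Scope R_scope.

Definition is_interval (I : R -> Prop) : Prop :=
  forall x y z, I x -> I z -> x <= y -> y <= z -> I y.

(* Nonempty finite sequences with entries in I: the domain \bigcup_n I^n. *)
Definition in_dom (I : R -> Prop) (s : list R) : Prop :=
  s <> nil /\ Forall I s.

Definition lmin (s : list R) : R :=
  match s with nil => 0 | x :: t => fold_left Rmin t x end.
Definition lmax (s : list R) : R :=
  match s with nil => 0 | x :: t => fold_left Rmax t x end.

(* A mean on I: M maps \bigcup_n I^n into I with min <= M <= max
   (values of M outside \bigcup_n I^n are irrelevant). *)
Definition is_mean (I : R -> Prop) (M : list R -> R) : Prop :=
  forall s, in_dom I s -> I (M s) /\ lmin s <= M s /\ M s <= lmax s.

Definition addRZ (p q : R * Z) : R * Z := (fst p + fst q, (snd p + snd q)%Z).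

Fixpoint sumF (F : R -> R * Z) (s : list R) : R * Z :=
  match s with
  | nil => (0, 0%Z)
  | x :: nil => F x
  | x :: t => addRZ (F x) (sumF F t)
  end.

Definition omegaF (I : R -> Prop) (F : R -> R * Z) (p : R * Z) : Prop :=
  exists s, in_dom I s /\ sumF F s = p.

(* Continuity of F : I -> R x Z (subspace topology on I, product topology on
   R x Z with Z discrete), written out with basic neighbourhoods ball x {k}. *)
Definition cont_I_RZ (I : R -> Prop) (F : R -> R * Z) : Prop :=
  forall x, I x -> forall eps, 0 < eps -> exists delta, 0 < delta /\
    forall y, I y -> Rabs (y - x) < delta ->
      Rabs (fst (F y) - fst (F x)) < eps /\ snd (F y) = snd (F x).

(* Continuity of G : S -> R for S a subset of R x Z with the subspace topology
   (Z discrete). *)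
Definition cont_RZ_on (S : R * Z -> Prop) (G : R * Z -> R) : Prop :=
  forall p, S p -> forall eps, 0 < eps -> exists delta, 0 < delta /\
    forall q, S q -> snd q = snd p -> Rabs (fst q - fst p) < delta ->
      Rabs (G q - G p) < eps.

Definition is_L (I : R -> Prop) (M : list R -> R) (F : R -> R * Z)
  (G : R * Z -> R) : Prop :=
  forall s, in_dom I s -> M s = G (sumF F s).

Definition type_T1plus (I : R -> Prop) (M : list R -> R) : Prop :=
  exists (F : R -> R * Z) (G : R * Z -> R),
    cont_I_RZ I F /\
    (forall p, omegaF I F p -> I (G p)) /\
    cont_RZ_on (omegaF I F) G /\
    is_L I M F G.

Definition cont_on (I : R -> Prop) (f : R -> R) : Prop :=
  forall x, I x -> forall eps, 0 < eps -> exists delta, 0 < delta /\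
    forall y, I y -> Rabs (y - x) < delta -> Rabs (f y - f x) < eps.

Definition strict_mono_on (I : R -> Prop) (f : R -> R) : Prop :=
  (forall x y, I x -> I y -> x < y -> f x < f y) \/
  (forall x y, I x -> I y -> x < y -> f y < f x).

Definition sumR (f : R -> R) (s : list R) : R :=
  fold_right (fun x acc => f x + acc) 0 s.

(* Quasi-arithmetic mean: M(x) = f^{-1}((f x_1 + ... + f x_n)/n).  Since f is
   injective on I and M(x) is in I, this is stated as f(M x) = average. *)
Definition quasi_arithmetic (I : R -> Prop) (M : list R -> R) : Prop :=
  exists f : R -> R, cont_on I f /\ strict_mono_on I f /\
    forall s, in_dom I s -> f (M s) = sumR f s / INR (length s).

(* If M = L_{F,G} with F continuous into R x Z, the integer component of F is
   continuous into a discrete space on the connected set I, hence constant; so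
   M s depends only on the length of s and on the sum of f := fst o F over s.
   Reflexivity M (x) = x then makes f injective, hence strictly monotone, and
   the intermediate value theorem yields y in I with f y equal to the average
   of f over s; s and (y, ..., y) have the same length and f-sum, so
   M s = M (y, ..., y) = y.  Conversely a quasi-arithmetic mean is L_{F,G} for
   F x = (f x, 1) and G (u, n) = f^-1 (u / n), and G is continuous because the
   inverse of a strictly monotone function on an interval is continuous. *)

From Stdlib Require Import Reals List ZArith Lra Lia Psatz Classical ClassicalEpsilon.
Open Scope R_scope.

Lemma is_interval_between I u v w : is_interval I -> I u -> I v ->
  (u <= w <= v \/ v <= w <= u) -> I w.
Proof. intros HI Hu Hv [[]|[]]; [apply (HI u w v)|apply (HI v w u)]; auto. Qed.

Lemma is_interval_segment I a x u : is_interval I -> I a -> I x ->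
  0 <= u <= 1 -> I (a + u * (x - a)).
Proof.
  intros HI Ha Hx Hu. apply (is_interval_between I a x _ HI Ha Hx).
  destruct (Rle_dec a x); [left|right]; split; nra.
Qed.

Lemma is_interval_opp I : is_interval I -> is_interval (fun x => I (- x)).
Proof. intros HI x y z Hx Hz Hxy Hyz. apply (HI (- z) (- y) (- x)); auto; lra. Qed.

Lemma cont_on_subset (I J : R -> Prop) f :
  (forall x, J x -> I x) -> cont_on I f -> cont_on J f.
Proof.
  intros HJI Hf x Hx eps Heps.
  destruct (Hf x (HJI x Hx) eps Heps) as [d [Hd Hd']].
  exists d; split; auto.
Qed.

Lemma cont_on_comp (I J : R -> Prop) f g :
  (forall x, J x -> I (g x)) -> cont_on J g -> cont_on I f ->
  cont_on J (fun x => f (g x)).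
Proof.
  intros HJI Hg Hf x Hx eps Heps.
  destruct (Hf (g x) (HJI x Hx) eps Heps) as [d [Hd Hd']].
  destruct (Hg x Hx d Hd) as [e [He He']].
  exists e; split; auto.
Qed.

Lemma cont_on_minus I f g :
  cont_on I f -> cont_on I g -> cont_on I (fun x => f x - g x).
Proof.
  intros Hf Hg x Hx eps Heps.
  destruct (Hf x Hx (eps / 2)) as [d1 [Hd1 Hd1']]; [lra|].
  destruct (Hg x Hx (eps / 2)) as [d2 [Hd2 Hd2']]; [lra|].
  exists (Rmin d1 d2); split; [now apply Rmin_glb_lt|].
  intros y Hy Hyx.
  specialize (Hd1' y Hy (Rlt_le_trans _ _ _ Hyx (Rmin_l _ _))).
  specialize (Hd2' y Hy (Rlt_le_trans _ _ _ Hyx (Rmin_r _ _))).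
  revert Hd1' Hd2'. unfold Rabs. repeat destruct Rcase_abs; lra.
Qed.

Lemma cont_on_affine I c m : cont_on I (fun u => c + u * m).
Proof.
  intros x _ eps Heps.
  assert (Hm := Rabs_pos m).
  exists (eps / (Rabs m + 1)); split; [apply Rdiv_lt_0_compat; lra|].
  intros y _ Hyx.
  replace (c + y * m - (c + x * m)) with ((y - x) * m) by ring.
  rewrite Rabs_mult.
  assert (E : eps / (Rabs m + 1) * (Rabs m + 1) = eps) by (field; lra).
  assert (Hyx0 := Rabs_pos (y - x)).
  nra.
Qed.

Lemma cont_on_continuity f : cont_on (fun _ => True) f -> continuity f.
Proof.
  intros Hf x eps Heps.
  destruct (Hf x I eps Heps) as [d [Hd Hd']].
  exists d; split; [exact Hd|]. intros y [_ Hy]. exact (Hd' y I Hy).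
Qed.

Lemma cont_on_clamp a b : a <= b -> cont_on (fun _ => True) (fun t => Rmax a (Rmin b t)).
Proof.
  intros Hab x _ eps Heps. exists eps; split; [exact Heps|].
  intros y _. unfold Rmax, Rmin, Rabs.
  repeat destruct Rle_dec; repeat destruct Rcase_abs; lra.
Qed.

(* Extending [h] by constants outside [a, b] reduces this to the intermediate
   value theorem on R. *)
Lemma IVT_segment h a b y : a <= b -> cont_on (fun t => a <= t <= b) h ->
  (h a <= y <= h b \/ h b <= y <= h a) -> exists t, a <= t <= b /\ h t = y.
Proof.
  intros Hab Hh Hy.
  set (c := fun t => Rmax a (Rmin b t)).
  assert (Hc : forall t, a <= c t <= b).
  { intro t. unfold c, Rmax, Rmin. repeat destruct Rle_dec; lra. }
  assert (Hc_id : forall t, a <= t <= b -> c t = t).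
  { intros t Ht. unfold c, Rmax, Rmin. repeat destruct Rle_dec; lra. }
  assert (Hg : continuity (fun t => h (c t) - y)).
  { apply continuity_minus; [|apply continuity_const; intros ? ?; reflexivity].
    apply cont_on_continuity, (cont_on_comp (fun t => a <= t <= b)); auto.
    now apply cont_on_clamp. }
  destruct (IVT_cor _ a b Hg Hab) as [t [Ht Hgt]].
  { rewrite !Hc_id by lra. destruct Hy; nra. }
  exists t. split; [exact Ht|]. rewrite Hc_id in Hgt by exact Ht. lra.
Qed.

Lemma IVT_interval I f a b y : is_interval I -> cont_on I f -> I a -> I b ->
  (f a <= y <= f b \/ f b <= y <= f a) -> exists t, I t /\ f t = y.
Proof.
  intros HI Hf Ha Hb.
  assert (K : forall a b, I a -> I b -> a <= b ->
            (f a <= y <= f b \/ f b <= y <= f a) -> exists t, I t /\ f t = y).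
  { clear a b Ha Hb. intros a b Ha Hb Hab Hy.
    assert (Hab_I : forall t, a <= t <= b -> I t).
    { intros t Ht. exact (is_interval_between I a b t HI Ha Hb (or_introl Ht)). }
    destruct (IVT_segment f a b y Hab (cont_on_subset I _ f Hab_I Hf) Hy)
      as [t [Ht Hft]].
    exists t; auto. }
  intro Hy. destruct (Rle_dec a b).
  - now apply (K a b).
  - apply (K b a); auto; [lra|tauto].
Qed.

Lemma IZR_neq_add_half z w : IZR z <> IZR w + 1 / 2.
Proof.
  intro H. destruct (Z_le_gt_dec z w) as [Hzw|Hzw].
  - apply IZR_le in Hzw. lra.
  - assert (Hzw' : (w + 1 <= z)%Z) by lia.
    apply IZR_le in Hzw'. rewrite plus_IZR in Hzw'. lra.
Qed.

(* A jump from [g a] to [g b > g a] would force [g] to take the value [g a + 1/2]. *)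
Lemma cont_on_IZR_const I (g : R -> Z) : is_interval I ->
  cont_on I (fun x => IZR (g x)) -> forall a b, I a -> I b -> g a = g b.
Proof.
  intros HI Hg.
  assert (K : forall a b, I a -> I b -> (g a < g b)%Z -> False).
  { intros a b Ha Hb Hab.
    destruct (IVT_interval I _ a b (IZR (g a) + 1 / 2) HI Hg Ha Hb) as [t [_ Ht]].
    - left. apply Zlt_le_succ, IZR_le in Hab. unfold Z.succ in Hab.
      rewrite plus_IZR in Hab. lra.
    - exact (IZR_neq_add_half _ _ Ht). }
  intros a b Ha Hb.
  destruct (Z.lt_trichotomy (g a) (g b)) as [Hab|[Hab|Hab]]; auto;
    exfalso; eauto.
Qed.

Lemma strict_mono_on_inj I f : strict_mono_on I f ->
  forall x y, I x -> I y -> f x = f y -> x = y.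
Proof.
  intros Hf x y Hx Hy E.
  destruct (Rtotal_order x y) as [Hxy|[Hxy|Hxy]]; auto; exfalso;
    destruct Hf as [Hf|Hf];
    [specialize (Hf x y)|specialize (Hf x y)|specialize (Hf y x)|specialize (Hf y x)];
    rewrite E in Hf; apply (Rlt_irrefl (f y)); auto.
Qed.

(* The points [p u < q u] of the linear homotopy from [(a, b)] to [(x, y)] never
   meet, so by injectivity and the IVT [f (q u) - f (p u)] cannot change sign. *)
Lemma cont_inj_same_order I f : is_interval I -> cont_on I f ->
  (forall x y, I x -> I y -> f x = f y -> x = y) ->
  forall a b x y, I a -> I b -> I x -> I y -> a < b -> x < y ->
  f a < f b -> f x < f y.
Proof.
  intros HI Hf Hinj a b x y Ha Hb Hx Hy Hab Hxy Hfab.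
  destruct (Rlt_dec (f x) (f y)) as [|Hfxy]; auto. exfalso.
  set (p := fun u => a + u * (x - a)).
  set (q := fun u => b + u * (y - b)).
  set (U := fun u => 0 <= u <= 1).
  assert (Hh : cont_on U (fun u => f (q u) - f (p u))).
  { apply cont_on_minus; apply (cont_on_comp I);
      try apply cont_on_affine; auto; intros u Hu; now apply is_interval_segment. }
  destruct (IVT_segment (fun u => f (q u) - f (p u)) 0 1 0) as [t [Ht Hft]];
    [lra|exact Hh| |].
  - right. unfold p, q. rewrite !Rmult_0_l, !Rmult_1_l, !Rplus_0_r.
    replace (b + (y - b)) with y by ring. replace (a + (x - a)) with x by ring. lra.
  - assert (E : q t = p t).
    { apply Hinj; [unfold q|unfold p|lra]; now apply is_interval_segment. }
    unfold p, q in E. destruct (Rle_dec t (1 / 2)); nra.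
Qed.

Lemma cont_inj_strict_mono_on I f : is_interval I -> cont_on I f ->
  (forall x y, I x -> I y -> f x = f y -> x = y) -> strict_mono_on I f.
Proof.
  intros HI Hf Hinj.
  destruct (classic (exists a b, I a /\ I b /\ a < b /\ f a < f b))
    as [[a [b [Ha [Hb [Hab Hfab]]]]]|Hnone].
  - left. intros x y Hx Hy Hxy.
    exact (cont_inj_same_order I f HI Hf Hinj a b x y Ha Hb Hx Hy Hab Hxy Hfab).
  - right. intros x y Hx Hy Hxy.
    destruct (Rtotal_order (f x) (f y)) as [H|[H|H]]; auto.
    + exfalso; apply Hnone; eauto 7.
    + apply Hinj in H; auto; lra.
Qed.

Definition cont_inv_on (I : R -> Prop) (f : R -> R) : Prop :=
  forall u, I u -> forall eps, 0 < eps -> exists d, 0 < d /\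
    forall v, I v -> Rabs (f v - f u) < d -> Rabs (v - u) < eps.

Lemma strict_incr_on_bound_above I f u eps : is_interval I ->
  (forall x y, I x -> I y -> x < y -> f x < f y) -> I u -> 0 < eps ->
  exists d, 0 < d /\ forall v, I v -> f v < f u + d -> v < u + eps.
Proof.
  intros HI Hf Hu Heps.
  destruct (classic (exists w, I w /\ u < w)) as [[w [Hw Huw]]|Hnone].
  - set (w' := Rmin w (u + eps / 2)).
    assert (Huw' : u < w') by (unfold w', Rmin; destruct Rle_dec; lra).
    assert (Hw'eps : w' <= u + eps / 2) by apply Rmin_r.
    assert (Iw' : I w').
    { apply (is_interval_between I u w w' HI Hu Hw). left. split; [lra|apply Rmin_l]. }
    exists (f w' - f u). split; [specialize (Hf u w' Hu Iw' Huw'); lra|].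
    intros v Hv Hfv. destruct (Rlt_dec v (u + eps)) as [|Hve]; auto.
    specialize (Hf w' v Iw' Hv ltac:(lra)). lra.
  - exists 1. split; [lra|]. intros v Hv _.
    destruct (Rle_dec v u); [lra|]. exfalso; apply Hnone; exists v; split; auto; lra.
Qed.

(* The lower bound is the upper one for the reflected function [x => - f (- x)]. *)
Lemma strict_incr_on_bound_below I f u eps : is_interval I ->
  (forall x y, I x -> I y -> x < y -> f x < f y) -> I u -> 0 < eps ->
  exists d, 0 < d /\ forall v, I v -> f u - f v < d -> u - eps < v.
Proof.
  intros HI Hf Hu Heps.
  destruct (strict_incr_on_bound_above (fun x => I (- x)) (fun x => - f (- x)) (- u) eps)
    as [d [Hd Hd']]; auto.
  - now apply is_interval_opp.
  - intros x y Hx Hy Hxy. specialize (Hf (- y) (- x) Hy Hx ltac:(lra)). lra.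
  - now rewrite Ropp_involutive.
  - exists d. split; [exact Hd|]. intros v Hv Hfv.
    specialize (Hd' (- v)). rewrite !Ropp_involutive in Hd'.
    specialize (Hd' Hv ltac:(lra)). lra.
Qed.

Lemma strict_incr_cont_inv_on I f : is_interval I ->
  (forall x y, I x -> I y -> x < y -> f x < f y) -> cont_inv_on I f.
Proof.
  intros HI Hf u Hu eps Heps.
  destruct (strict_incr_on_bound_above I f u eps HI Hf Hu Heps) as [d1 [Hd1 Hd1']].
  destruct (strict_incr_on_bound_below I f u eps HI Hf Hu Heps) as [d2 [Hd2 Hd2']].
  exists (Rmin d1 d2). split; [now apply Rmin_glb_lt|].
  intros v Hv Hfv.
  assert (Hmin := conj (Rmin_l d1 d2) (Rmin_r d1 d2)). apply Rabs_def2 in Hfv.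
  assert (Hup : v < u + eps) by (apply Hd1'; auto; lra).
  assert (Hlow : u - eps < v) by (apply Hd2'; auto; lra).
  apply Rabs_def1; lra.
Qed.

Lemma strict_mono_cont_inv_on I f : is_interval I -> strict_mono_on I f ->
  cont_inv_on I f.
Proof.
  intros HI [Hf|Hf]; [now apply strict_incr_cont_inv_on|].
  intros u Hu eps Heps.
  destruct (strict_incr_cont_inv_on I (fun x => - f x) HI) with u eps as [d [Hd Hd']];
    auto.
  { intros x y Hx Hy Hxy. specialize (Hf x y Hx Hy Hxy). lra. }
  exists d. split; [exact Hd|]. intros v Hv Hfv. apply Hd'; auto.
  replace (- f v - - f u) with (- (f v - f u)) by ring. now rewrite Rabs_Ropp.
Qed.

Lemma lmin_repeat y m : lmin (repeat y (S m)) = y.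
Proof.
  simpl. induction m as [|m IH]; simpl; auto. rewrite Rmin_left; [exact IH|lra].
Qed.

Lemma lmax_repeat y m : lmax (repeat y (S m)) = y.
Proof.
  simpl. induction m as [|m IH]; simpl; auto. rewrite Rmax_left; [exact IH|lra].
Qed.

Lemma in_dom_repeat I y m : I y -> in_dom I (repeat y (S m)).
Proof.
  intros Hy. split; [discriminate|].
  apply Forall_forall. intros z Hz. now apply repeat_spec in Hz as ->.
Qed.

Lemma mean_repeat I M y m : is_mean I M -> I y -> M (repeat y (S m)) = y.
Proof.
  intros HM Hy.
  destruct (HM _ (in_dom_repeat I y m Hy)) as [_ [Hmin Hmax]].
  rewrite lmin_repeat in Hmin. rewrite lmax_repeat in Hmax. lra.
Qed.

Lemma sumR_repeat f y m : sumR f (repeat y m) = INR m * f y.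
Proof.
  induction m as [|m IH]; simpl sumR; [simpl; ring|]. rewrite IH, S_INR. ring.
Qed.

Lemma sumF_const_snd F c s : s <> nil -> Forall (fun x => snd (F x) = c) s ->
  sumF F s = (sumR (fun x => fst (F x)) s, (Z.of_nat (length s) * c)%Z).
Proof.
  induction s as [|x t IH]; intros Hne Hc; [congruence|].
  apply Forall_cons_iff in Hc as [Hx Ht]. destruct t as [|y t].
  - simpl. rewrite (surjective_pairing (F x)), Hx. simpl. f_equal; [ring|now destruct c].
  - change (sumF F (x :: y :: t)) with (addRZ (F x) (sumF F (y :: t))).
    rewrite IH by (discriminate || assumption). unfold addRZ. simpl sumR.
    rewrite Hx. f_equal. cbn [snd]. change (length (x :: y :: t)) with (S (length (y :: t))).
    rewrite Nat2Z.inj_succ, Z.mul_succ_l. ring.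
Qed.

Lemma sumR_between_extremes f s : s <> nil -> exists a b, In a s /\ In b s /\
  f a * INR (length s) <= sumR f s <= f b * INR (length s).
Proof.
  induction s as [|x t IH]; intros Hne; [congruence|].
  destruct t as [|y t].
  - exists x, x. simpl. repeat split; auto; lra.
  - destruct IH as [a [b [Ha [Hb [Hlo Hhi]]]]]; [discriminate|].
    change (length (x :: y :: t)) with (S (length (y :: t))). rewrite S_INR.
    change (sumR f (x :: y :: t)) with (f x + sumR f (y :: t)).
    assert (Hn := pos_INR (length (y :: t))).
    exists (if Rle_dec (f x) (f a) then x else a), (if Rle_dec (f b) (f x) then x else b).
    split; [destruct Rle_dec; [left|right]; auto|].
    split; [destruct Rle_dec; [left|right]; auto|].
    split; destruct Rle_dec; nra.
Qed.

Lemma average_attained I f s : is_interval I -> cont_on I f -> in_dom I s ->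
  exists y, I y /\ f y = sumR f s / INR (length s).
Proof.
  intros HI Hf [Hne Hs].
  destruct (sumR_between_extremes f s Hne) as [a [b [Ha [Hb [Hlo Hhi]]]]].
  assert (Hn : 0 < INR (length s)).
  { apply lt_0_INR. destruct s; [congruence|simpl; lia]. }
  rewrite Forall_forall in Hs.
  apply (IVT_interval I f a b); auto. left. split.
  - apply (Rmult_le_reg_r (INR (length s))); auto. field_simplify; lra.
  - apply (Rmult_le_reg_r (INR (length s))); auto. field_simplify; lra.
Qed.

Lemma cont_I_RZ_fst I F : cont_I_RZ I F -> cont_on I (fun x => fst (F x)).
Proof.
  intros HF x Hx eps Heps. destruct (HF x Hx eps Heps) as [d [Hd Hd']].
  exists d. split; [exact Hd|]. intros y Hy Hyx. exact (proj1 (Hd' y Hy Hyx)).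
Qed.

Lemma cont_I_RZ_snd_const I F : is_interval I -> cont_I_RZ I F ->
  forall a b, I a -> I b -> snd (F a) = snd (F b).
Proof.
  intros HI HF. apply cont_on_IZR_const; auto.
  intros x Hx eps Heps. destruct (HF x Hx eps Heps) as [d [Hd Hd']].
  exists d. split; [exact Hd|]. intros y Hy Hyx.
  rewrite (proj2 (Hd' y Hy Hyx)), Rminus_diag, Rabs_R0. exact Heps.
Qed.

Lemma L_eq_of_sum_length I M F G : is_interval I -> cont_I_RZ I F -> is_L I M F G ->
  forall s t, in_dom I s -> in_dom I t -> length s = length t ->
  sumR (fun x => fst (F x)) s = sumR (fun x => fst (F x)) t -> M s = M t.
Proof.
  intros HI HF HL s t Hs Ht Hlen Hsum.
  destruct Hs as [Hs_ne Hs_I], Ht as [Ht_ne Ht_I].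
  destruct s as [|x0 s']; [congruence|].
  assert (Hx0 : I x0) by (now apply Forall_cons_iff in Hs_I).
  assert (Hconst : forall u, Forall I u -> Forall (fun x => snd (F x) = snd (F x0)) u).
  { intros u Hu. eapply Forall_impl; [|exact Hu].
    intros x Hx. now apply (cont_I_RZ_snd_const I F HI HF). }
  rewrite (HL _ (conj Hs_ne Hs_I)), (HL _ (conj Ht_ne Ht_I)).
  rewrite !(sumF_const_snd F (snd (F x0))) by auto.
  now rewrite Hlen, Hsum.
Qed.

Lemma type_T1plus_quasi_arithmetic I M : is_interval I -> is_mean I M ->
  type_T1plus I M -> quasi_arithmetic I M.
Proof.
  intros HI HM [F [G [HF [_ [_ HL]]]]].
  set (f := fun x => fst (F x)).
  assert (Hf : cont_on I f) by now apply cont_I_RZ_fst.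
  assert (HMeq := L_eq_of_sum_length I M F G HI HF HL).
  assert (Hinj : forall x y, I x -> I y -> f x = f y -> x = y).
  { intros x y Hx Hy Hfxy.
    rewrite <- (mean_repeat I M x 0 HM Hx), <- (mean_repeat I M y 0 HM Hy).
    apply HMeq; try apply in_dom_repeat; auto. simpl. unfold f in Hfxy. now rewrite Hfxy. }
  exists f. split; [exact Hf|]. split; [now apply cont_inj_strict_mono_on|].
  intros s Hs.
  destruct (average_attained I f s HI Hf Hs) as [y [Hy Hfy]].
  assert (Hn : length s = S (pred (length s))).
  { destruct Hs as [Hne _]. destruct s; [congruence|reflexivity]. }
  assert (E : M s = M (repeat y (length s))).
  { apply HMeq; auto.
    - rewrite Hn. now apply in_dom_repeat.
    - now rewrite repeat_length.
    - fold f. rewrite sumR_repeat, Hfy. field.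
      rewrite Hn. apply not_0_INR. discriminate. }
  rewrite E, Hn at 1. now rewrite (mean_repeat I M y _ HM Hy).
Qed.

(* [inv_average I f (u, n)] is [f^-1 (u / n)]; the value chosen by [epsilon]
   outside [omegaF] is irrelevant. *)
Definition inv_average (I : R -> Prop) (f : R -> R) (p : R * Z) : R :=
  epsilon (inhabits 0) (fun x => I x /\ f x = fst p / IZR (snd p)).

Lemma sumF_count f s : s <> nil ->
  sumF (fun x => (f x, 1%Z)) s = (sumR f s, Z.of_nat (length s)).
Proof.
  intros Hne. rewrite (sumF_const_snd _ 1%Z s Hne), Z.mul_1_r; [reflexivity|].
  now apply Forall_forall.
Qed.

Lemma inv_average_sumF I M f : is_mean I M -> strict_mono_on I f ->
  (forall s, in_dom I s -> f (M s) = sumR f s / INR (length s)) ->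
  forall s, in_dom I s -> inv_average I f (sumF (fun x => (f x, 1%Z)) s) = M s.
Proof.
  intros HM Hmono Hq s Hs.
  rewrite (sumF_count f s (proj1 Hs)). unfold inv_average. cbn [fst snd].
  rewrite <- INR_IZR_INZ.
  destruct (epsilon_spec (inhabits 0)
              (fun x => I x /\ f x = sumR f s / INR (length s))) as [Hx Hfx].
  - exists (M s). split; [apply (HM s Hs)|apply Hq, Hs].
  - apply (strict_mono_on_inj I f Hmono); auto; [apply (HM s Hs)|].
    now rewrite Hfx, Hq.
Qed.

Lemma quasi_arithmetic_type_T1plus I M : is_interval I -> is_mean I M ->
  quasi_arithmetic I M -> type_T1plus I M.
Proof.
  intros HI HM [f [Hf [Hmono Hq]]].
  set (F := fun x => (f x, 1%Z)).
  assert (HG := inv_average_sumF I M f HM Hmono Hq).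
  exists F, (inv_average I f). split; [|split; [|split]].
  - intros x Hx eps Heps. destruct (Hf x Hx eps Heps) as [d [Hd Hd']].
    exists d. split; [exact Hd|]. intros y Hy Hyx. split; [now apply Hd'|reflexivity].
  - intros p [s [Hs <-]]. rewrite HG by exact Hs. apply (HM s Hs).
  - intros p [s [Hs <-]] eps Heps.
    destruct (strict_mono_cont_inv_on I f HI Hmono (M s) (proj1 (HM s Hs)) eps Heps)
      as [d [Hd Hd']].
    set (n := INR (length s)).
    assert (Hn : 0 < n).
    { apply lt_0_INR. destruct Hs as [Hne _]. destruct s; [congruence|simpl; lia]. }
    exists (d * n). split; [nra|].
    intros q [t [Ht <-]] Hlen Hsum.
    rewrite !HG by assumption. apply Hd'; [apply (HM t Ht)|].
    unfold F in Hlen, Hsum.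
    rewrite (sumF_count f s (proj1 Hs)), (sumF_count f t (proj1 Ht)) in Hlen, Hsum.
    cbn [fst snd] in Hlen, Hsum. apply Nat2Z.inj in Hlen.
    rewrite (Hq s Hs), (Hq t Ht), Hlen. fold n.
    replace (sumR f t / n - sumR f s / n) with ((sumR f t - sumR f s) / n) by (field; lra).
    unfold Rdiv. rewrite Rabs_mult, Rabs_inv, (Rabs_pos_eq n) by lra.
    apply (Rmult_lt_reg_r n); auto. rewrite Rmult_assoc, Rinv_l, Rmult_1_r by lra. lra.
  - intros s Hs. symmetry. now apply HG.
Qed.

Theorem proposition3p2 (I : R -> Prop) (M : list R -> R) :
  is_interval I -> is_mean I M ->
  (type_T1plus I M <-> quasi_arithmetic I M).
Proof.
  intros HI HM. split.
  - now apply type_T1plus_quasi_arithmetic.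
  - now apply quasi_arithmetic_type_T1plus.
Qed.
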